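(* Consider a network update in which a set of flow segments, each with a traffic volume, is moved from old subpaths to new subpaths, executed by the distributed scheduling heuristic ez-Schedule described in the context, starting from an initial configuration in which, for every directed link, the sum of volumes of the segments routed over it does not exceed its capacity. Then ez-Schedule is correct: at every time during the update and as long as update operations are executed, no link carries traffic exceeding its capacity (the update is congestion-free).
   Context: Each directed link has a capacity. Each switch $s$ maintains, for each of its outgoing links $\ell$, the residual capacity of $\ell$, namely the capacity of $\ell$ minus the total volume of the segments whose currently installed forwarding entries at $s$ route over $\ell$. Each segment is updated as in \textsc{Basic-Update} (GoodToMove messages propagate backwards along the new subpath, each switch installing its new entry before forwarding GoodToMove; after the first switch switches, Removing messages propagate along the old subpath and remove old entries, which frees the corresponding volume on the old links). ez-Schedule: each segment update is assigned by the controller a priority (high if it lies on a critical cycle of the dependency graph between update operations and link capacities, medium if it lies only on non-critical cycles, low otherwise). A switch receiving GoodToMove for a segment $S$ whose new entry uses outgoing link $\ell$ installs the new entry only if the residual capacity of $\ell$ is at least the volume of $S$; if there are pending higher-priority operations on $\ell$, it installs the entry only if in addition the residual capacity minus the volume of $S$ remains sufficient for those higher-priority operations; otherwise it waits until capacity is freed by removals. Upon installing, it decreases the residual capacity of $\ell$ by the volume of $S$. *)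

From HB Require Import structures.
From mathcomp Require Import all_boot all_order all_algebra.
Set Implicit Arguments. Unset Strict Implicit. Unset Printing Implicit Defensive.
Import Order.TTheory GRing.Theory Num.Theory.
Local Open Scope ring_scope.

Section EzSchedule.
Variables (R : realDomainType) (V Seg : finType).
Variables (cap : V -> V -> R)
          (vol : Seg -> R)
          (oldp newp : Seg -> seq V)
          (prio : Seg -> 'I_3).        (* 0 = low, 1 = medium, 2 = high *)

Definition hop_is (p : seq V) (i : nat) (u v : V) : bool :=
  [&& i.+1 < size p, nth u p i == u & nth u p i.+1 == v]%N.

(* Forwarding state: which entries are installed (indexed by the position
   of the switch along the old / new subpath of each segment), and the
   residual capacity each switch u maintains for its outgoing link (u,v). *)
Record state := State {
  inst_old : Seg -> nat -> bool;
  inst_new : Seg -> nat -> bool;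
  resid    : V -> V -> R }.

(* total volume of segments whose installed entries route over (u,v):
   an upper bound on the traffic carried by link (u,v). *)
Definition load_of (io inw : Seg -> nat -> bool) (u v : V) : R :=
  \sum_(S : Seg)
     ((\sum_(i < size (oldp S)) (if io S i && hop_is (oldp S) i u v
                                 then vol S else 0))
    + (\sum_(i < size (newp S)) (if inw S i && hop_is (newp S) i u v
                                 then vol S else 0))).

Definition load (st : state) (u v : V) : R :=
  load_of (inst_old st) (inst_new st) u v.

Definition pending_hi (st : state) (S : Seg) (u v : V) : R :=
  \sum_(T : Seg | (prio S < prio T)%N)
     \sum_(j < size (newp T))
        (if ~~ inst_new st T j && hop_is (newp T) j u v then vol T else 0).

Definition init_old : Seg -> nat -> bool := fun S i => (i.+1 < size (oldp S))%N.
Definition init_new : Seg -> nat -> bool := fun _ _ => false.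

Definition init_state : state :=
  State init_old init_new (fun u v => cap u v - load_of init_old init_new u v).

Definition upd_entry (f : Seg -> nat -> bool) (S : Seg) (i : nat) (b : bool) :=
  fun T j => if (T == S) && (j == i)%N then b else f T j.

Definition upd_resid (r : V -> V -> R) (u v : V) (x : R) :=
  fun a b => if (a == u) && (b == v) then x else r a b.

Inductive step : state -> state -> Prop :=
  (* the switch at position i of the new subpath of S receives GoodToMove
     (sent by its successor: the last switch initiates, any other successor
     sends it once it has installed its own new entry), and installs its new
     entry on link (u,v) only if the residual capacity suffices for S and
     for the pending higher-priority operations on (u,v) *)
  | step_install st S i u v :
      hop_is (newp S) i u v ->
      ~~ inst_new st S i ->
      (i.+2 = size (newp S) \/ inst_new st S i.+1)%N ->
      vol S + pending_hi st S u v <= resid st u v ->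
      step st (State (inst_old st) (upd_entry (inst_new st) S i true)
                     (upd_resid (resid st) u v (resid st u v - vol S)))
  (* the switch at position i of the old subpath of S receives Removing
     (the first switch after it has switched to its new entry, any other
     switch after its predecessor removed its old entry) and removes its
     old entry, freeing the volume of S on link (u,v) *)
  | step_remove st S i u v :
      hop_is (oldp S) i u v ->
      inst_old st S i ->
      (if i is j.+1 then ~~ inst_old st S j else inst_new st S 0%N) ->
      step st (State (upd_entry (inst_old st) S i false) (inst_new st)
                     (upd_resid (resid st) u v (resid st u v + vol S))).

Inductive reachable : state -> Prop :=
  | reach_init : reachable init_state
  | reach_step st st' : reachable st -> step st st' -> reachable st'.

End EzSchedule.

From HB Require Import structures.
From mathcomp Require Import all_boot all_order all_algebra.
From mathcomp Require Import ring.
Set Implicit Arguments. Unset Strict Implicit. Unset Printing Implicit Defensive.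
Import Order.TTheory GRing.Theory Num.Theory.
Local Open Scope ring_scope.

(* Every switch keeps [resid] equal to capacity minus installed load: an
   installation subtracts exactly the volume it adds to the load, a removal
   adds back exactly the volume it frees. An installation is only allowed when
   the residual covers the volume (plus a nonnegative reserve for pending
   higher-priority operations), so residuals never become negative, and they
   start nonnegative because the initial configuration respects capacities. *)

Lemma hop_is_lt_size (V : finType) (p : seq V) i u v :
  hop_is p i u v -> (i < size p)%N.
Proof. by case/and3P => /ltnW. Qed.

Lemma hop_is_functional (V : finType) (p : seq V) i u v a b :
  hop_is p i u v -> hop_is p i a b = (a == u) && (b == v).
Proof.
case/and3P => lt_i1 /eqP nth_u /eqP nth_v.
rewrite /hop_is lt_i1 (set_nth_default u a lt_i1) (set_nth_default u a (ltnW lt_i1)).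
by rewrite nth_u nth_v ![_ == u]eq_sym ![_ == v]eq_sym.
Qed.

Lemma sum_upd_entry (M : zmodType) (I : finType) (n : I -> nat)
    (f : I -> nat -> bool) (F : I -> nat -> bool -> M) S i b :
  (i < n S)%N ->
  \sum_(T : I) \sum_(j < n T) F T j (upd_entry f S i b T j)
  = \sum_(T : I) \sum_(j < n T) F T j (f T j) - F S i (f S i) + F S i b.
Proof.
move=> lt_i; set i' := Ordinal lt_i.
rewrite [LHS](bigD1 S) // [in RHS](bigD1 S) //=.
rewrite [X in X + _ = _](bigD1 i') // [X in _ = X + _ - _ + _](bigD1 i') //=.
rewrite {1}/upd_entry !eqxx /=.
have -> : \sum_(j < n S | j != i') F S j (upd_entry f S i b S j)
        = \sum_(j < n S | j != i') F S j (f S j).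
  by apply: eq_bigr => j; rewrite -val_eqE /upd_entry eqxx => /negbTE ->.
have -> : \sum_(T | T != S) \sum_(j < n T) F T j (upd_entry f S i b T j)
        = \sum_(T | T != S) \sum_(j < n T) F T j (f T j).
  by apply: eq_bigr => T ne_T; apply: eq_bigr => j _; rewrite /upd_entry (negbTE ne_T).
set a := F S i (f S i); set c := F S i b; set s1 := \sum_(_ < _ | _) _; set s2 := \sum_(_ | _) _.
by rewrite -[a + s1 + s2]addrA (addrAC a) subrr add0r -addrA addrC.
Qed.

Section Invariant.

Variables (R : realDomainType) (V Seg : finType).
Variables (cap : V -> V -> R) (vol : Seg -> R) (oldp newp : Seg -> seq V)
          (prio : Seg -> 'I_3).
Hypothesis vol_ge0 : forall S, 0 <= vol S.

Let hop_vol (S : Seg) (u v a b : V) : R :=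
  if (a == u) && (b == v) then vol S else 0.

Lemma load_of_install (io inw : Seg -> nat -> bool) S i (u v a b : V) :
  hop_is (newp S) i u v -> ~~ inw S i ->
  load_of vol oldp newp io (upd_entry inw S i true) a b
  = load_of vol oldp newp io inw a b + hop_vol S u v a b.
Proof.
move=> hop_i off_i; rewrite /load_of !big_split /=.
rewrite (@sum_upd_entry _ _ (fun T => size (newp T)) _
           (fun T j x => if x && hop_is (newp T) j a b then vol T else 0));
  last exact: hop_is_lt_size hop_i.
by rewrite (negbTE off_i) (hop_is_functional a b hop_i) subr0 addrA.
Qed.

Lemma load_of_remove (io inw : Seg -> nat -> bool) S i (u v a b : V) :
  hop_is (oldp S) i u v -> io S i ->
  load_of vol oldp newp (upd_entry io S i false) inw a b
  = load_of vol oldp newp io inw a b - hop_vol S u v a b.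
Proof.
move=> hop_i on_i; rewrite /load_of !big_split /=.
rewrite (@sum_upd_entry _ _ (fun T => size (oldp T)) _
           (fun T j x => if x && hop_is (oldp T) j a b then vol T else 0));
  last exact: hop_is_lt_size hop_i.
by rewrite on_i (hop_is_functional a b hop_i) /= addr0 addrAC.
Qed.

Lemma pending_hi_ge0 st S u v : 0 <= pending_hi vol newp prio st S u v.
Proof. by apply: sumr_ge0 => T _; apply: sumr_ge0 => j _; case: ifP. Qed.

Definition resid_consistent (st : state R V Seg) :=
  forall a b, resid st a b = cap a b - load vol oldp newp st a b.

Lemma step_resid_consistent st st' :
  step vol oldp newp prio st st' ->
  resid_consistent st -> resid_consistent st'.
Proof.
case=> {st'} [st1 S i u v hop_i off_i _ _ | st1 S i u v hop_i on_i _] consistent a b;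
  rewrite /load /= /upd_resid.
- rewrite (load_of_install _ _ _ hop_i off_i) /hop_vol.
  by case: ifP => [/andP [/eqP -> /eqP ->] | _]; rewrite consistent /load; ring.
- rewrite (load_of_remove _ _ _ hop_i on_i) /hop_vol.
  by case: ifP => [/andP [/eqP -> /eqP ->] | _]; rewrite consistent /load; ring.
Qed.

Lemma step_resid_ge0 st st' a b :
  step vol oldp newp prio st st' ->
  0 <= resid st a b -> 0 <= resid st' a b.
Proof.
case=> {st'} [st1 S i u v _ _ _ enough | st1 S i u v _ _ _]; rewrite /upd_resid /=;
  case: ifP => [/andP [/eqP -> /eqP ->] | _ //].
- by move=> _; rewrite subr_ge0 (le_trans _ enough) // lerDl pending_hi_ge0.
- by move=> resid_ge0; apply: addr_ge0.
Qed.

Lemma reachable_resid_consistent st :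
  reachable cap vol oldp newp prio st -> resid_consistent st.
Proof.
by elim=> [// | st0 st1 _ IH step01]; apply: step_resid_consistent step01 IH.
Qed.

Lemma reachable_resid_ge0 (adj : rel V) st :
  (forall u v, adj u v ->
     load_of vol oldp newp (init_old oldp) (@init_new Seg) u v <= cap u v) ->
  reachable cap vol oldp newp prio st ->
  forall a b, adj a b -> 0 <= resid st a b.
Proof.
move=> init_ok; elim=> [a b /init_ok | st0 st1 _ IH step01 a b adj_ab].
  by rewrite subr_ge0.
exact: step_resid_ge0 step01 (IH a b adj_ab).
Qed.

End Invariant.

Theorem theorem3 (R : realDomainType) (V Seg : finType) (adj : rel V)
    (cap : V -> V -> R) (vol : Seg -> R) (oldp newp : Seg -> seq V)
    (prio : Seg -> 'I_3) :
  (forall u v, 0 <= cap u v) ->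
  (forall S, 0 <= vol S) ->
  (* well-formed update: old and new subpaths are nonempty simple paths
     over directed links with the same endpoints *)
  (forall S, oldp S != [::] /\ newp S != [::]) ->
  (forall S, uniq (oldp S) /\ uniq (newp S)) ->
  (forall S x, head x (oldp S) = head x (newp S)
               /\ last x (oldp S) = last x (newp S)) ->
  (forall S i u v, hop_is (oldp S) i u v -> adj u v) ->
  (forall S i u v, hop_is (newp S) i u v -> adj u v) ->
  (* initial configuration respects capacities *)
  (forall u v, adj u v ->
     load_of vol oldp newp (init_old oldp) (@init_new Seg) u v <= cap u v) ->
  (* every state reached by ez-Schedule is congestion-free *)
  forall st, reachable cap vol oldp newp prio st ->
  forall u v, adj u v -> load vol oldp newp st u v <= cap u v.
Proof.
move=> _ vol_ge0 _ _ _ _ _ init_ok st reach_st u v adj_uv.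
have := reachable_resid_ge0 vol_ge0 init_ok reach_st adj_uv.
by rewrite (reachable_resid_consistent reach_st) subr_ge0.
Qed.
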